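(* Let $T$ be a tree of maximum degree at most $3$ and let $S$ be a set of endvertices (vertices of degree at most $1$) of $T$ such that $S$ is not an exponential dominating set of $T$, but $S$ is a subset of some minimum exponential dominating set of $T$. Root $T$ at a vertex $r\in V(T)\setminus S$. For every vertex $u$ of $T$, let $T_u$ be the subtree consisting of $u$ and all its descendants, and define $$\partial w(u)=\max\left\{2^{{\rm dist}_T(u,v)}\left(1-w_{(T_u,S\cap V(T_u))}(v)\right):v\in V(T_u)\right\}.$$ (i) If $u\neq r$ is a vertex with $\partial w(u)>1$ and $\partial w(v)\leq 1$ for every descendant $v$ of $u$, then $S\cup\{u\}$ is a subset of some minimum exponential dominating set of $T$. (ii) If $\partial w(u)\leq 1$ for every vertex $u$ of $T$, then $S\cup\{r\}$ is a minimum exponential dominating set of $T$.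
   Context: ${\rm dist}_T(u,v)$ is the usual distance in $T$. For a graph $G$, a set $S\subseteq V(G)$, and vertices $u,v$ with $u\in S$ or $v\in S$, ${\rm dist}_{(G,S)}(u,v)$ is the minimum number of edges of a path $P$ in $G$ between $u$ and $v$ such that $S$ contains exactly one endvertex of $P$ and no internal vertex of $P$, and $\infty$ if no such path exists (so ${\rm dist}_{(G,S)}(u,u)=0$ for $u\in S$). For $u\in V(G)$, $w_{(G,S)}(u)=\sum_{v\in S}(1/2)^{{\rm dist}_{(G,S)}(u,v)-1}$ with $(1/2)^{\infty}=0$. $S$ is an exponential dominating set of $G$ if $w_{(G,S)}(u)\geq 1$ for every $u\in V(G)$, and $\gamma_e(G)$ is the minimum cardinality of an exponential dominating set of $G$; an exponential dominating set of cardinality $\gamma_e(G)$ is called minimum. *)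

From HB Require Import structures.
From mathcomp Require Import all_boot all_order all_algebra.
Set Implicit Arguments. Unset Strict Implicit. Unset Printing Implicit Defensive.
Import Order.TTheory GRing.Theory Num.Theory.

Section ExpDom.
Variables (T : finType) (e : rel T).

Definition deg (x : T) : nat := #|[set y | e x y]|.

Definition is_tree : Prop :=
  (forall x y : T, connect e x y) /\
  (forall c : seq T, uniq c -> 3 <= size c -> ~~ cycle e c).

(* Smallest n < #|T| with P n, if any.  (All distances below are realised by
   paths/walks with fewer than #|T| edges, so this bound is harmless.) *)
Definition mindist (P : nat -> bool) : option nat :=
  let k := find P (iota 0 #|T|) in if k < #|T| then Some k else None.

Definition gdist (x y : T) : nat :=
  odflt 0 (mindist (fun n => [exists p : n.-tuple T, path e x p && (last x p == y)])).

(* A path x :: p in the induced subgraph on V (size p edges, ending at y)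
   such that S contains exactly one endvertex and no internal vertex.
   For the trivial path (p = [::], y = x) the condition is x \in S. *)
Definition spath (V S : {set T}) (x y : T) (p : seq T) : bool :=
  [&& path e x p, last x p == y, uniq (x :: p), all (mem V) (x :: p) &
   if p is [::] then x \in S
   else ((x \in S) != (y \in S)) && all (fun z => z \notin S) (take (size p).-1 p)].

(* dist_{(G,S)}(x,y) for G the subgraph induced by V; None stands for infinity. *)
Definition sdist (V S : {set T}) (x y : T) : option nat :=
  mindist (fun n => [exists p : n.-tuple T, spath V S x y p]).

Local Open Scope ring_scope.

Definition weight (V S : {set T}) (u : T) : rat :=
  \sum_(v in S) match sdist V S u v with
                | Some d => (2%:R ^-1 : rat) ^ (d%:Z - 1)
                | None => 0
                end.

Definition eds (V S : {set T}) : bool :=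
  (S \subset V) && [forall u in V, 1 <= weight V S u].

Definition min_eds (D : {set T}) : Prop :=
  eds setT D /\ (forall D' : {set T}, eds setT D' -> (#|D| <= #|D'|)%N).

(* Rooted at r: V(T_u) = u together with its descendants, i.e. the vertices v
   such that u lies on the r-v path. *)
Definition desc (r u : T) : {set T} :=
  [set v | gdist r v == (gdist r u + gdist u v)%N].

(* \partial w(u). The max is over the nonempty set V(T_u) (u is in it),
   so we seed the max with the term for v = u. *)
Definition dterm (r : T) (S : {set T}) (u v : T) : rat :=
  (2%:R ^+ gdist u v) * (1 - weight (desc r u) (S :&: desc r u) v).

Definition dw (r : T) (S : {set T}) (u : T) : rat :=
  \big[Num.max/dterm r S u u]_(v in desc r u) dterm r S u v.

End ExpDom.

(* In a tree two vertices are joined by a unique path, so dist_(G,S)(x,s) is the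
   length of that path when it meets S in exactly one endvertex and nowhere
   inside.  Rooted at r, every path entering T_u passes through u, and every path
   leaving T_u passes through the parent of u.

   The key estimate: in a tree of maximum degree 3, the vertices of a set D seen
   from q through a neighbour c have total weight at most 1/2, since either c is
   in D, or c has at most two further branches, each of weight at most 1/4.

   So if an exponential dominating set D contains S and agrees with S on T_u, a
   vertex v of T_u receives at most (1/2)^dist(u,v) from outside T_u, which is
   exactly dw(u) <= 1.  Hence when dw(u) > 1, a minimum D has a vertex of T_u
   outside S, and replacing D on T_u by (S on T_u) + u does not increase its size.
   The new set still dominates: outside T_u the vertex u alone sends at least as
   much as all of D inside T_u did, and inside T_u the conditions dw(c) <= 1 at
   the children c of u say that u makes up the weight S is missing there.  For
   u = r the same computation shows that S + r dominates T. *)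

From HB Require Import structures.
From mathcomp Require Import all_boot all_order all_algebra.
From mathcomp Require Import zify lra.
Set Implicit Arguments. Unset Strict Implicit. Unset Printing Implicit Defensive.
Import Order.TTheory GRing.Theory Num.Theory.

Lemma mem_cons_tl (T : eqType) (x y : T) s : y \in s -> y \in x :: s.
Proof. by rewrite inE => ->; rewrite orbT. Qed.

Lemma ohead_mem (T : eqType) (s : seq T) c : ohead s = Some c -> c \in s.
Proof. by case: s => //= a s [->]; rewrite inE eqxx. Qed.

Local Open Scope ring_scope.

Lemma ler_sum_subpred (R : numDomainType) (I : finType) (P Q : pred I)
    (F : I -> R) :
  (forall i, P i -> Q i) -> (forall i, Q i -> 0 <= F i) ->
  \sum_(i | P i) F i <= \sum_(i | Q i) F i.
Proof.
move=> PQ F_ge0; rewrite [X in _ <= X](bigID P) /=.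
rewrite (eq_bigl P) => [|i]; last by case: (boolP (P i)) => Pi; rewrite ?andbT ?andbF ?PQ.
by rewrite lerDl; apply: sumr_ge0 => i /andP [/F_ge0].
Qed.

Lemma sum_le1_card_le2 (R : realFieldType) (I : finType) (A : {set I}) (F : I -> R) :
  (#|A| <= 2)%N -> (forall i, i \in A -> F i <= 2%:R^-1) -> \sum_(i in A) F i <= 1.
Proof.
move=> HA HF; apply: le_trans (ler_sum _ HF) _.
have H2 : 2%:R != 0 :> R by rewrite pnatr_eq0.
rewrite sumr_const -[_ *+ #|A|]mulr_natr -[X in _ <= X](mulVf H2).
by rewrite ler_wpM2l ?invr_ge0 ?ler0n // ler_nat.
Qed.

Local Close Scope ring_scope.

(** * Paths in trees *)

Section TreePaths.
Variables (T : finType) (e : rel T).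
Hypotheses (e_sym : symmetric e) (e_irr : irreflexive e) (e_tree : is_tree e).

Definition upath x p y := [&& path e x p, last x p == y & uniq (x :: p)].

Lemma upath_split x p1 z p2 y : upath x (p1 ++ z :: p2) y ->
  upath x (rcons p1 z) z /\ upath z p2 y.
Proof.
case/and3P=> Hp /eqP Hl Hu.
rewrite cat_path /= in Hp; case/and3P: Hp => Hp1 Hez Hp2.
move: Hu; rewrite -cat_cons cat_uniq => /and3P [Hu1 Hn Hu2].
split; apply/and3P; split => //.
- by rewrite -cats1 cat_path /= Hp1 Hez.
- by rewrite last_rcons.
- rewrite -cats1 -cat_cons cat_uniq Hu1 /= andbT orbF.
  by apply: contra Hn => Hz; apply/hasP; exists z => //=; rewrite inE eqxx.
- by rewrite last_cat /= in Hl; rewrite Hl.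
Qed.

Lemma upath_nil x y : upath x [::] y -> y = x.
Proof. by case/and3P => _ /eqP. Qed.

Lemma upath_loop x q : upath x q x -> q = [::].
Proof.
case: q => [//|b q] /and3P [_ /eqP Hl Hu].
move: Hu => /= /andP [Hx _].
by move: (mem_last b q); rewrite /= in Hl; rewrite Hl (negbTE Hx).
Qed.

Lemma path_symE x p : path (fun a b => e b a) x p = path e x p.
Proof. by apply: eq_path => a b; rewrite e_sym. Qed.

(* Otherwise x, a, ..., y followed by the reverse of b, ..., y would be a cycle. *)
Lemma upaths_disjoint_eq x a p b q y :
  upath x (a :: p) y -> upath x (b :: q) y ->
  (forall z, z \in a :: p -> z \in b :: q -> z = y) -> a = b.
Proof.
move=> /and3P [Hp1 /eqP Hp2 Hp3] /and3P [Hq1 /eqP Hq2 Hq3] Hmeet.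
apply/eqP/negPn/negP => Nab.
set c := x :: (a :: p) ++ rev (belast b q).
have Hc : cycle e c.
  rewrite /c /cycle rcons_cat cat_path Hp1 /= -rev_cons.
  rewrite [last a p]Hp2 -Hq2 -[x :: belast b q]/(belast x (b :: q)).
  by rewrite rev_path path_symE.
have Hcu : uniq c.
  rewrite /c -cat_cons cat_uniq Hp3 rev_uniq /=.
  move: Hq3 => /andP [Hxq Hbq].
  have [Hub1 Hub2] : uniq (belast b q) /\ last b q \notin belast b q.
    by move: (Hbq : uniq (b :: q)); rewrite lastI rcons_uniq => /andP [].
  rewrite Hub1 andbT; apply/hasPn => z; rewrite mem_rev => Hz.
  have Hzq : z \in b :: q by apply: mem_belast Hz.
  rewrite inE negb_or; apply/andP; split; first by apply: contraNneq Hxq => <-.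
  apply/negP => /Hmeet /(_ Hzq) Ez.
  by move: Hub2; rewrite -[last b q]/(last x (b :: q)) Hq2 -Ez Hz.
suff Hsize : 3 <= size c by move: (e_tree.2 _ Hcu Hsize); rewrite Hc.
rewrite /c /= size_cat size_rev size_belast /=.
case: p Hp2 {Hp1 Hp3 Hmeet Hc Hcu c} => [|a1 p] /=; last by rewrite addSn !ltnS.
case: q Hq2 Nab {Hq1 Hq3} => [|b1 q] /=; last by rewrite !ltnS.
by move=> E1 /eqP N E2; case: N; rewrite E1 E2.
Qed.

Lemma upath_uniq x y p q : upath x p y -> upath x q y -> p = q.
Proof.
move: {2}(size p + size q) (leqnn (size p + size q)) => n.
elim: n x y p q => [|n IH] x y [|a p] [|b q] //.
- by move=> _ /upath_nil E; rewrite E => /upath_loop.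
- by move=> _ H /upath_nil E; move: H; rewrite E => /upath_loop.
move=> Hs Hp Hq.
have [Eab|Nab] := eqVneq a b.
  subst b; congr cons.
  move: Hp Hq => /and3P [/= /andP [_ Hp1] Hp2 /andP [_ Hp3]]
                /and3P [/= /andP [_ Hq1] Hq2 /andP [_ Hq3]].
  apply: (IH a y); [|by apply/and3P..].
  by move: Hs; rewrite /= addnS ltnS addSn => /ltnW.
(* Either the paths meet again before y, and by induction they agree up to that
   meeting point, or they are internally disjoint. *)
case: (boolP (has (fun z => (z \in b :: q) && (z != y)) (a :: p))); last first.
  move/hasPn => Hn; exfalso; move/eqP: Nab; apply; apply: (upaths_disjoint_eq Hp Hq).
  move=> z /Hn; rewrite negb_and negbK => /orP [/negP Hz /Hz //|/eqP //].
case/hasP => z Hzp /andP [Hzq Hzy]; exfalso.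
have [p1 [p2 Ep]] : exists p1 p2, a :: p = p1 ++ z :: p2.
  by case/splitPr: Hzp => p1 p2; exists p1, p2.
have [q1 [q2 Eq]] : exists q1 q2, b :: q = q1 ++ z :: q2.
  by case/splitPr: Hzq => q1 q2; exists q1, q2.
rewrite Ep Eq in Hs Hp Hq.
have [Hp1 Hp2] := upath_split Hp; have [Hq1 Hq2] := upath_split Hq.
have Hne s : upath z s y -> 0 < size s.
  by case: s => // /upath_nil E; rewrite E eqxx in Hzy.
have Erc : rcons p1 z = rcons q1 z.
  apply: (IH x z) => //.
  move: Hs (Hne _ Hp2) (Hne _ Hq2); rewrite !size_cat /= !size_rcons; lia.
have [E] := rcons_inj Erc.
suff : head a (a :: p) = head b (b :: q) by move=> /= Eab; move: Nab; rewrite Eab eqxx.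
by rewrite Ep Eq E; case: q1 {E Erc Eq Hq Hq1 Hs}.
Qed.

Lemma ex_upath x y : exists p, upath x p y.
Proof.
have /connectP [p Hp ->] := e_tree.1 x y.
by case: (shortenP Hp) => p' Hp' Hu _; exists p'; apply/and3P.
Qed.

Definition tpath x y := xchoose (ex_upath x y).

Lemma tpathP x y : upath x (tpath x y) y.
Proof. exact: (xchooseP (ex_upath x y)). Qed.

Lemma tpathE x y p : upath x p y -> tpath x y = p.
Proof. exact: upath_uniq (tpathP x y). Qed.

Lemma tpath_path x y : path e x (tpath x y).
Proof. by case/and3P: (tpathP x y). Qed.

Lemma tpath_last x y : last x (tpath x y) = y.
Proof. by case/and3P: (tpathP x y) => _ /eqP. Qed.

Lemma tpath_uniq x y : uniq (x :: tpath x y).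
Proof. by case/and3P: (tpathP x y). Qed.

Lemma mem_tpath_last x y : y \in x :: tpath x y.
Proof. by rewrite -{1}(tpath_last x y) mem_last. Qed.

Lemma tpathxx x : tpath x x = [::].
Proof. by apply: tpathE; rewrite /upath /= eqxx. Qed.

Lemma tpath_eq0 x y : (tpath x y == [::]) = (x == y).
Proof.
apply/eqP/eqP => [E|->]; last exact: tpathxx.
by have := tpath_last x y; rewrite E.
Qed.

Lemma tpath_edge x y : e x y -> tpath x y = [:: y].
Proof.
move=> Hxy; apply: tpathE; rewrite /upath /= Hxy eqxx /= inE andbT.
by apply: contraTneq Hxy => ->; rewrite e_irr.
Qed.

Lemma tpath_rev x y : tpath y x = rev (belast x (tpath x y)).
Proof.
apply: tpathE; have := tpathP x y; move: (tpath x y) => p.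
case/and3P => Hp /eqP Hl Hu; apply/and3P; split.
- by rewrite -Hl rev_path path_symE.
- by case: p {Hp Hu} Hl => [|a p'] /= Hl; rewrite ?Hl // rev_cons last_rcons.
- by rewrite -Hl -rev_rcons -lastI rev_uniq.
Qed.

Lemma mem_tpath_rev x y z : (z \in y :: tpath y x) = (z \in x :: tpath x y).
Proof.
have -> : y :: tpath y x = rev (x :: tpath x y).
  by rewrite tpath_rev [x :: _]lastI rev_rcons tpath_last.
by rewrite mem_rev.
Qed.

Lemma size_tpath_rev x y : size (tpath y x) = size (tpath x y).
Proof. by rewrite tpath_rev size_rev size_belast. Qed.

Lemma tpath_cat x y z : z \in x :: tpath x y -> tpath x y = tpath x z ++ tpath z y.
Proof.
rewrite inE; case/orP => [/eqP ->|Hz]; first by rewrite tpathxx.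
move: (tpathP x y); case/splitPr: Hz => p1 p2 Hp.
have [H1 H2] := upath_split Hp.
by rewrite (tpathE H1) (tpathE H2) cat_rcons.
Qed.

Lemma ohead_tpath_mem x y z : z \in tpath x y -> ohead (tpath x y) = ohead (tpath x z).
Proof.
move=> Hz; have Hxz : x != z.
  by apply: contraTneq Hz => ->; have := tpath_uniq z y; case/andP.
rewrite (tpath_cat (mem_cons_tl _ Hz)).
by case: (tpath x z) (tpath_eq0 x z) => //; rewrite (negbTE Hxz).
Qed.

Lemma tpath_prefix x y p q : tpath x y = p ++ q -> tpath x (last x p) = p.
Proof.
move=> E; apply: tpathE; move: (tpathP x y); rewrite E /upath.
rewrite cat_path -cat_cons cat_uniq => /and3P [/andP [Hp _] _ /and3P [Hu _ _]].
by rewrite Hp eqxx Hu.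
Qed.

Lemma tpath_disjoint x y z w : z \in tpath x y ->
  w \in x :: tpath x z -> w \in tpath z y -> False.
Proof.
move=> Hz Hw1 Hw2; have := tpath_uniq x y.
rewrite (tpath_cat (mem_cons_tl _ Hz)) -cat_cons cat_uniq => /and3P [_ /hasP H _].
by apply: H; exists w.
Qed.

Lemma tpath_ohead x y c : ohead (tpath x y) = Some c ->
  e x c /\ tpath x y = c :: tpath c y.
Proof.
move=> H; have Hc := ohead_mem H.
have Hxc : e x c.
  by have := tpath_path x y; case: (tpath x y) H => //= a s [->] /andP [].
by rewrite (tpath_cat (mem_cons_tl _ Hc)) (tpath_edge Hxc).
Qed.

Lemma size_tpath_walk x p : path e x p -> size (tpath x (last x p)) <= size p.
Proof.
move=> Hp; case: (shortenP Hp) => p' Hp' Hu Hs.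
have -> : tpath x (last x p') = p' by apply: tpathE; apply/and3P.
by apply: uniq_leq_size => //; case/andP: Hu.
Qed.

Lemma size_tpath_walk_ltn x p : path e x p -> ~~ uniq (x :: p) ->
  size (tpath x (last x p)) < size p.
Proof.
move=> Hp Hnu; case: (shortenP Hp) => p' Hp' Hu Hs.
have -> : tpath x (last x p') = p' by apply: tpathE; apply/and3P.
case: (boolP (x \in p)) => Hx.
  suff : size (x :: p') <= size p by [].
  apply: uniq_leq_size => // z; rewrite inE; case/orP => [/eqP ->|] //.
  exact: Hs.
rewrite ltnNge; apply/negP => Hle.
move: Hnu; rewrite /= Hx /=; apply/negP/negPn.
by apply: (leq_size_uniq _ Hs Hle); case/andP: Hu.
Qed.

Lemma tpath_concat x u y : uniq (x :: tpath x u ++ tpath u y) ->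
  tpath x y = tpath x u ++ tpath u y.
Proof.
move=> Hu; apply: tpathE; apply/and3P; split => //.
  by rewrite cat_path tpath_path tpath_last tpath_path.
by rewrite last_cat !tpath_last.
Qed.

Lemma size_tpath_concat_ltn x u y : ~~ uniq (x :: tpath x u ++ tpath u y) ->
  size (tpath x y) < size (tpath x u) + size (tpath u y).
Proof.
have Hw : path e x (tpath x u ++ tpath u y).
  by rewrite cat_path tpath_path tpath_last tpath_path.
by move/(size_tpath_walk_ltn Hw); rewrite last_cat !tpath_last size_cat.
Qed.

Lemma size_tpath_ltn x y : size (tpath x y) < #|T|.
Proof.
have /card_uniqP /= H := tpath_uniq x y.
by have := max_card (mem (x :: tpath x y)); rewrite H.
Qed.

(* The vertex preceding y on the path from x; junk value x when y = x. *)
Definition penult x y := last x (belast x (tpath x y)).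

Lemma tpath_rcons x y : x != y -> tpath x y = rcons (tpath x (penult x y)) y.
Proof.
move=> Hxy; rewrite /penult.
have : tpath x y != [::] by rewrite tpath_eq0.
have := tpath_last x y; have := tpathP x y.
case/lastP: (tpath x y) => [//|q w] Hu; rewrite last_rcons => Ew _.
subst w; rewrite belast_rcons /=.
by rewrite (@tpath_prefix _ y _ [:: y]) // cats1 (tpathE Hu).
Qed.

Lemma penult_edge x y : x != y -> e (penult x y) y.
Proof.
move=> Hxy; have := tpath_path x y.
by rewrite (tpath_rcons Hxy) rcons_path tpath_last => /andP [].
Qed.

Lemma mem_penult x y : penult x y \in x :: tpath x y.
Proof.
case: (eqVneq x y) => [<-|Hxy]; first by rewrite /penult tpathxx inE eqxx.
by rewrite (tpath_rcons Hxy) -cats1 -cat_cons mem_cat mem_tpath_last.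
Qed.

Lemma ohead_tpath_rev x y : x != y -> ohead (tpath y x) = Some (penult x y).
Proof.
move=> Hxy; rewrite tpath_rev (tpath_rcons Hxy) belast_rcons.
by rewrite lastI rev_rcons tpath_last.
Qed.

Lemma deg_inner_tpath x y z : z \in tpath x y -> z != y -> 2 <= deg e z.
Proof.
move=> Hz Hzy.
have : tpath z y != [::] by rewrite tpath_eq0.
case E: (tpath z y) => [//|w s] _.
have [Hzw _] : e z w /\ tpath z y = w :: tpath w y by apply: tpath_ohead; rewrite E.
have Hxz : x != z by apply: contraTneq Hz => ->; have := tpath_uniq z y; case/andP.
have Hpw : penult x z != w.
  apply/negP => /eqP Epw; apply: (tpath_disjoint Hz (mem_penult x z)).
  by rewrite Epw E mem_head.
rewrite /deg; apply: (@leq_trans #|[set penult x z; w]|); first by rewrite cards2 Hpw.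
apply: subset_leq_card; apply/subsetP => a; rewrite !inE => /orP [] /eqP -> //.
by rewrite e_sym penult_edge.
Qed.

Lemma mindist_some (P : nat -> bool) n : n < #|T| -> P n ->
  (forall j, j < n -> ~~ P j) -> mindist T P = Some n.
Proof.
move=> Hn Pn Hj; rewrite /mindist.
suff -> : find P (iota 0 #|T|) = n by rewrite Hn.
rewrite -(subnKC (ltnW Hn)) iotaD find_cat.
have -> : has P (iota 0 n) = false.
  by apply/hasPn => j; rewrite mem_iota /= add0n; exact: Hj.
rewrite size_iota add0n -(prednK (_ : 0 < #|T| - n)) ?subn_gt0 //=.
by rewrite Pn addn0.
Qed.

Lemma mindist_none (P : nat -> bool) : (forall j, j < #|T| -> ~~ P j) ->
  mindist T P = None.
Proof.
move=> Hj; rewrite /mindist.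
have : ~~ has P (iota 0 #|T|).
  by apply/hasPn => j; rewrite mem_iota add0n; exact: Hj.
rewrite has_find -leqNgt size_iota => H.
have := find_size P (iota 0 #|T|); rewrite size_iota => H'.
suff -> : find P (iota 0 #|T|) = #|T| by rewrite ltnn.
by apply/eqP; rewrite eqn_leq H H'.
Qed.

Lemma gdistE x y : gdist e x y = size (tpath x y).
Proof.
rewrite /gdist (@mindist_some _ (size (tpath x y))) //.
- exact: size_tpath_ltn.
- apply/existsP; exists (in_tuple (tpath x y)).
  by rewrite /= tpath_path tpath_last eqxx.
move=> j Hj; apply/existsP => [[p /andP [Hp /eqP Hl]]].
have := size_tpath_walk Hp; rewrite Hl size_tuple => H.
by move: (leq_ltn_trans H Hj); rewrite ltnn.
Qed.

(* The only candidate for the path in [sdist] is the tree path. *)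
Definition tspath V S x y := spath e V S x y (tpath x y).

Lemma sdistE V S x y :
  sdist e V S x y = if tspath V S x y then Some (size (tpath x y)) else None.
Proof.
have Heq n (p : n.-tuple T) : spath e V S x y p -> tval p = tpath x y.
  by case/and5P => H1 H2 H3 _ _; symmetry; apply: tpathE; apply/and3P.
rewrite /sdist; case: ifP => Hs.
  apply: mindist_some; first exact: size_tpath_ltn.
    by apply/existsP; exists (in_tuple (tpath x y)).
  move=> j Hj; apply/existsP => [[p /Heq E]].
  by move: Hj; rewrite -E size_tuple ltnn.
apply: mindist_none => j _; apply/existsP => [[p Hp]].
by move: Hs; rewrite /tspath -(Heq _ _ Hp) Hp.
Qed.

Lemma mem_take_tpath x y z :
  (z \in take (size (tpath x y)).-1 (tpath x y)) = (z \in tpath x y) && (z != y).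
Proof.
have := tpath_uniq x y; have := tpath_last x y.
case/lastP: (tpath x y) => [|p w] //.
rewrite last_rcons size_rcons /= -cats1 take_size_cat // => -> /andP [_].
rewrite cat_uniq /= andbT orbF => /andP [_ Hw].
rewrite mem_cat inE; case: (eqVneq z y) => [->|]; last by rewrite orbF andbT.
by rewrite (negbTE Hw).
Qed.

Lemma tspathE V S x y : tspath V S x y =
  [&& all (mem V) (x :: tpath x y),
      if x == y then x \in S else (x \in S) != (y \in S) &
      all (fun z => (z == y) || (z \notin S)) (tpath x y)].
Proof.
rewrite /tspath /spath tpath_path tpath_last tpath_uniq eqxx /=.
case: (eqVneq x y) => [<-|nxy]; first by rewrite tpathxx /= !andbT.
have -> : all (fun z => z \notin S) (take (size (tpath x y)).-1 (tpath x y)) =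
          all (fun z => (z == y) || (z \notin S)) (tpath x y).
  apply/allP/allP => H z Hz.
    by case: (eqVneq z y) => //= Hzy; apply: H; rewrite mem_take_tpath Hz.
  move: Hz; rewrite mem_take_tpath => /andP [Hz Hzy].
  by move: (H z Hz); rewrite (negbTE Hzy).
have : tpath x y != [::] by rewrite tpath_eq0.
by case: (tpath x y).
Qed.

Lemma tspath_sub V S x y z : tspath V S x y -> z \in x :: tpath x y -> z \in V.
Proof. by rewrite tspathE => /and3P [/allP H _ _] /H. Qed.

Lemma tspath_inner V S x y z :
  tspath V S x y -> z \in tpath x y -> z != y -> z \notin S.
Proof.
rewrite tspathE => /and3P [_ _ /allP H] Hz Hzy.
by move: (H z Hz); rewrite (negbTE Hzy).
Qed.

Lemma tspathxx V S x : tspath V S x x = (x \in V) && (x \in S).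
Proof. by rewrite tspathE tpathxx eqxx /= !andbT. Qed.

Lemma tspathI (V S : {set T}) x y : x != y ->
  (forall z, z \in x :: tpath x y -> z \in V) -> (x \in S) != (y \in S) ->
  (forall z, z \in tpath x y -> z != y -> z \notin S) -> tspath V S x y.
Proof.
move=> Hxy HV HS Hin; rewrite tspathE (negbTE Hxy) HS.
apply/and3P; split => //; apply/allP => z Hz; first exact: HV.
by case: (eqVneq z y) => //= Hzy; apply: Hin.
Qed.

Lemma eq_tspath (V S1 S2 : {set T}) x y :
  (forall z, z \in x :: tpath x y -> (z \in S1) = (z \in S2)) ->
  tspath V S1 x y = tspath V S2 x y.
Proof.
move=> H; rewrite !tspathE (H x (mem_head _ _)) (H y (mem_tpath_last x y)).
by congr [&& _, _ & _]; apply: eq_in_all => z Hz; rewrite H // mem_cons_tl.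
Qed.

(** * Rooted subtrees *)

Section Rooted.
Variable r : T.

Lemma in_desc u v : (v \in desc e r u) = (u \in r :: tpath r v).
Proof.
rewrite /desc inE !gdistE; apply/eqP/idP => [H|Hu]; last first.
  by rewrite (tpath_cat Hu) size_cat.
case: (boolP (uniq (r :: tpath r u ++ tpath u v))) => Hun.
  by rewrite (tpath_concat Hun) -cat_cons mem_cat mem_tpath_last.
by have := size_tpath_concat_ltn Hun; rewrite H ltnn.
Qed.

Lemma desc_self u : u \in desc e r u.
Proof. by rewrite in_desc mem_tpath_last. Qed.

Lemma desc_root v : v \in desc e r r.
Proof. by rewrite in_desc mem_head. Qed.

Lemma tpath_desc_cat u v : v \in desc e r u -> tpath r v = tpath r u ++ tpath u v.
Proof. by rewrite in_desc => /tpath_cat. Qed.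

Lemma desc_subpath u v z : v \in desc e r u -> z \in u :: tpath u v -> z \in desc e r u.
Proof.
move=> Hv; rewrite inE; case/orP => [/eqP ->|Hz]; first exact: desc_self.
have := tpath_desc_cat Hv; rewrite (tpath_cat (mem_cons_tl _ Hz)) catA.
move/tpath_prefix; rewrite last_cat !tpath_last => E.
by rewrite in_desc E -cat_cons mem_cat mem_tpath_last.
Qed.

Lemma penult_notin_desc u : u != r -> penult r u \notin desc e r u.
Proof.
move=> Hu; have Hru : r != u by rewrite eq_sym.
rewrite in_desc; have := tpath_uniq r u.
by rewrite (tpath_rcons Hru) -rcons_cons rcons_uniq => /andP [].
Qed.

(* [penult r u] is the parent of u. *)
Lemma ohead_tpath_out u y : u != r -> y \notin desc e r u ->
  ohead (tpath u y) = Some (penult r u).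
Proof.
move=> Hu Hy; have Hru : r != u by rewrite eq_sym.
case: (boolP (uniq (r :: tpath r u ++ tpath u y))) => Hun.
  by move: Hy; rewrite in_desc (tpath_concat Hun) -cat_cons mem_cat mem_tpath_last.
move: Hun; rewrite -cat_cons cat_uniq tpath_uniq /=.
have /= /andP [Huy ->] := tpath_uniq u y; rewrite andbT negbK.
case/hasP => z Hz1 Hz2.
have Hzu : z != u by apply: contraNneq Huy => E; rewrite -{1}E.
rewrite (ohead_tpath_mem Hz1) (ohead_tpath_rev Hzu); congr Some.
have := tpath_cat Hz2; rewrite (tpath_rcons Hru) (tpath_rcons Hzu) -rcons_cat.
case/rcons_inj => E2.
by rewrite -(tpath_last r (penult r u)) E2 last_cat !tpath_last.
Qed.

Lemma tpath_out_notin_desc u y z : u != r -> y \notin desc e r u ->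
  z \in tpath u y -> z \notin desc e r u.
Proof.
move=> Hu Hy Hz; apply/negP => Hzd.
have E1 : ohead (tpath u z) = Some (penult r u).
  by rewrite -(ohead_tpath_out Hu Hy) (ohead_tpath_mem Hz).
have := tpath_uniq r z; rewrite (tpath_desc_cat Hzd) -cat_cons cat_uniq.
case/and3P => _ /hasP []; exists (penult r u); first exact: ohead_mem E1.
exact: mem_penult.
Qed.

Lemma desc_gate u x s : x \notin desc e r u -> s \in desc e r u -> u \in tpath x s.
Proof.
move=> Hx Hs.
have Hu : u != r by apply: contraNneq Hx => ->; exact: desc_root.
have Hxu : x != u by apply: contraNneq Hx => ->; exact: desc_self.
have Hun : uniq (x :: tpath x u ++ tpath u s).
  rewrite -cat_cons cat_uniq tpath_uniq /=.
  have /= /andP [Hus ->] := tpath_uniq u s; rewrite andbT.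
  apply/hasPn => z Hz; rewrite -mem_tpath_rev inE; apply/negP.
  case/orP => [/eqP Ez|Hz2]; first by move: Hz; rewrite Ez (negbTE Hus).
  by have := tpath_out_notin_desc Hu Hx Hz2; rewrite (desc_subpath Hs (mem_cons_tl _ Hz)).
rewrite (tpath_concat Hun).
by move: (mem_tpath_last x u); rewrite mem_cat inE eq_sym (negbTE Hxu) => /= ->.
Qed.

Lemma tpath_out_avoid u x y z : x \notin desc e r u -> y \notin desc e r u ->
  z \in x :: tpath x y -> z \notin desc e r u.
Proof.
move=> Hx Hy Hz; apply/negP => Hzd.
have Hu : u != r by apply: contraNneq Hx => ->; exact: desc_root.
have Hzx : z \in tpath x y.
  by move: Hz; rewrite inE; case/orP => // /eqP E; move: Hx; rewrite -E Hzd.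
have Hu2 : u \in tpath x y.
  by rewrite (tpath_cat (mem_cons_tl _ Hzx)) mem_cat (desc_gate Hx Hzd).
have Hxu : x != u by apply: contraNneq Hx => ->; exact: desc_self.
apply: (tpath_disjoint Hu2 (mem_penult x u)).
have := ohead_tpath_rev Hxu; rewrite (ohead_tpath_out Hu Hx) => -[<-].
exact: ohead_mem (ohead_tpath_out Hu Hy).
Qed.

Lemma desc_convex u a b z : a \in desc e r u -> b \in desc e r u ->
  z \in a :: tpath a b -> z \in desc e r u.
Proof.
move=> Ha Hb Hz; apply/negPn/negP => Hzd.
have Hza : z \in tpath a b.
  by move: Hz; rewrite inE; case/orP => // /eqP E; move: Hzd; rewrite E Ha.
have Hu1 : u \in a :: tpath a z by rewrite -mem_tpath_rev mem_cons_tl ?desc_gate.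
exact: (tpath_disjoint Hza Hu1 (desc_gate Hzd Hb)).
Qed.

Lemma desc_child u v : v \in desc e r u -> v != u -> exists c,
  [/\ e u c, c \in desc e r u, c != u, v \in desc e r c & tpath u v = c :: tpath c v].
Proof.
move=> Hv Hvu.
have : tpath u v != [::] by rewrite tpath_eq0 eq_sym.
case E: (tpath u v) => [//|c s] _.
have [Huc Ec] : e u c /\ tpath u v = c :: tpath c v by apply: tpath_ohead; rewrite E.
exists c; split => //.
- by apply: (desc_subpath Hv); rewrite E inE mem_head orbT.
- by apply: contraTneq Huc => ->; rewrite e_irr.
- by rewrite in_desc (tpath_desc_cat Hv) E -cat_cons mem_cat mem_head orbT.
by rewrite -E.
Qed.

Lemma parent_notin_desc u c : e u c -> c \in desc e r u -> u \notin desc e r c.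
Proof.
move=> Huc Hc; rewrite in_desc; apply/negP => H.
have := tpath_uniq r c; rewrite (tpath_desc_cat Hc) (tpath_edge Huc) -cat_cons cat_uniq.
by case/and3P => _ /hasP []; exists c; rewrite ?mem_head.
Qed.

Lemma desc_trans u c v : c \in desc e r u -> v \in desc e r c -> v \in desc e r u.
Proof.
move=> Hc Hv; rewrite in_desc (tpath_desc_cat Hv) (tpath_desc_cat Hc).
by rewrite -catA -cat_cons mem_cat mem_tpath_last.
Qed.

End Rooted.

Local Open Scope ring_scope.

(** * Exponential weights *)

Definition halfpow (n : nat) : rat := 2%:R^-1 ^+ n.

Lemma halfpow_gt0 n : 0 < halfpow n.
Proof. by rewrite exprn_gt0 // invr_gt0. Qed.

Lemma halfpow_ge0 n : 0 <= halfpow n.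
Proof. exact/ltW/halfpow_gt0. Qed.

Lemma halfpowD m n : halfpow (m + n) = halfpow m * halfpow n.
Proof. exact: exprD. Qed.

Lemma halfpowS n : halfpow n.+1 = 2%:R^-1 * halfpow n.
Proof. exact: exprS. Qed.

Lemma exp2_halfpow n : 2%:R ^+ n * halfpow n = 1.
Proof. by rewrite /halfpow exprVn mulfV // expf_neq0 // pnatr_eq0. Qed.

(* (1/2)^(d - 1) = 2 (1/2)^d *)
Definition wterm (V S : {set T}) (x s : T) : rat :=
  if tspath V S x s then 2 * halfpow (size (tpath x s)) else 0.

Lemma wterm_ge0 V S x s : 0 <= wterm V S x s.
Proof. by rewrite /wterm; case: ifP => // _; rewrite mulr_ge0 ?halfpow_ge0. Qed.

Lemma wterm_le V S x s : wterm V S x s <= 2 * halfpow (size (tpath x s)).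
Proof. by rewrite /wterm; case: ifP => // _; rewrite mulr_ge0 ?halfpow_ge0. Qed.

Lemma weightE V S x : weight e V S x = \sum_(s in S) wterm V S x s.
Proof.
apply: eq_bigr => s _; rewrite sdistE /wterm; case: ifP => // _.
by rewrite expfzDr ?invr_eq0 ?pnatr_eq0 // mulrC.
Qed.

Lemma weight_ge2 (V S : {set T}) x : x \in V -> x \in S -> 2 <= weight e V S x.
Proof.
move=> HV HS; rewrite weightE (bigD1 x) //=.
rewrite /wterm tspathxx HV HS tpathxx mulr1 lerDl.
by apply: sumr_ge0 => s _; exact: wterm_ge0.
Qed.

Lemma ler_sum_wterm (A B : {set T}) V S V' S' x : A \subset B ->
  (forall s, s \in A -> tspath V S x s -> tspath V' S' x s) ->
  \sum_(s in A) wterm V S x s <= \sum_(s in B) wterm V' S' x s.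
Proof.
move=> /subsetP AB Htr.
apply: (@le_trans _ _ (\sum_(s in A) wterm V' S' x s)).
  apply: ler_sum => s Hs; rewrite /wterm.
  by case: ifP => [/(Htr s Hs) ->|_] //; case: ifP => // _; rewrite mulr_ge0 ?halfpow_ge0.
by apply: ler_sum_subpred AB _ => s _; exact: wterm_ge0.
Qed.

Definition visible (D : {set T}) q y :=
  (y \in D) && all (fun z => (z == y) || (z \notin D)) (tpath q y).

Definition vweight (D : {set T}) q (A : {pred T}) : rat :=
  \sum_(y in A | visible D q y) halfpow (size (tpath q y)).

Lemma wterm_through (V D : {set T}) x u s : x \notin D -> u \in x :: tpath x s ->
  wterm V D x s <=
  2 * halfpow (size (tpath x u)) *
  (if visible D u s then halfpow (size (tpath u s)) else 0).
Proof.
move=> HxD Hu; rewrite /wterm; case: ifP => Hts; last first.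
  by case: ifP => // _; rewrite !mulr_ge0 ?halfpow_ge0.
have Hcat := tpath_cat Hu.
have Hxs : x != s.
  by apply: contraNneq HxD => Exs; move: Hts; rewrite -Exs tspathxx => /andP [].
rewrite ifT; first by rewrite Hcat size_cat halfpowD mulrA.
have HsD : s \in D.
  move: Hts; rewrite tspathE (negbTE Hxs) (negbTE HxD) => /and3P [_ H _].
  by case: (s \in D) H.
rewrite /visible HsD; apply/allP => z Hz; case: (eqVneq z s) => //= Hzs.
by apply: (tspath_inner Hts) Hzs; rewrite Hcat mem_cat Hz orbT.
Qed.

Lemma sum_wterm_through (D B : {set T}) x u : x \notin D ->
  (forall s, s \in B -> u \in x :: tpath x s) ->
  \sum_(s in D :&: B) wterm setT D x s <= 2 * halfpow (size (tpath x u)) * vweight D u B.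
Proof.
move=> HxD Hgate; apply: (@le_trans _ _ (\sum_(s in D :&: B)
   2 * halfpow (size (tpath x u)) *
   (if visible D u s then halfpow (size (tpath u s)) else 0))).
  apply: ler_sum => s; rewrite in_setI => /andP [_ Hs].
  exact: wterm_through (Hgate s Hs).
rewrite -big_distrr /= ler_wpM2l ?mulr_ge0 ?halfpow_ge0 // -big_mkcondr /=.
apply: ler_sum_subpred => [s|s _]; last exact: halfpow_ge0.
by rewrite in_setI => /andP [/andP [_ ->] ->].
Qed.

Definition branch q c : {set T} := [set y | ohead (tpath q y) == Some c].

Lemma tpath_branch q c y : y \in branch q c -> tpath q y = c :: tpath c y.
Proof. by rewrite inE => /eqP /tpath_ohead []. Qed.

Lemma vweight_le_branches (D : {set T}) u (A : {pred T}) (N : {set T}) :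
  (forall s, s \in A -> visible D u s -> [exists c in N, ohead (tpath u s) == Some c]) ->
  vweight D u A <= \sum_(c in N) vweight D u (branch u c).
Proof.
move=> HN; pose hd s := odflt u (ohead (tpath u s)).
rewrite /vweight (partition_big hd (mem N)) => [|s /andP [Hs Hv]]; last first.
  by case/existsP: (HN s Hs Hv) => c /andP [Hc /eqP Ho]; rewrite /hd Ho.
apply: ler_sum => c Hc.
apply: ler_sum_subpred => [s /andP [/andP [Hs Hv] /eqP Hhd]|s _]; last first.
  exact: halfpow_ge0.
rewrite Hv andbT inE; case/existsP: (HN s Hs Hv) => c' /andP [_ /eqP Ho].
by move: Hhd; rewrite /hd Ho /= => ->.
Qed.

Lemma branch_proper q c c' : e q c -> e c c' -> c' != q ->
  branch c c' \proper branch q c.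
Proof.
move=> Hqc Hcc' Hc'q; apply/properP; split; last first.
  exists c; first by rewrite inE (tpath_edge Hqc).
  by rewrite inE tpathxx.
apply/subsetP => y Hy; have := Hy; rewrite !inE => /eqP Hh.
have Hq : q \notin tpath c y.
  have Hcq : e c q by rewrite e_sym.
  apply: contra Hc'q => Hq; move: Hh.
  by rewrite (ohead_tpath_mem Hq) (tpath_edge Hcq) => -[->].
have -> : tpath q y = c :: tpath c y.
  apply: tpathE; apply/and3P; split; first by rewrite /= Hqc tpath_path.
    by rewrite /= tpath_last.
  rewrite cons_uniq tpath_uniq andbT inE negb_or Hq andbT.
  by apply: contraTneq Hqc => ->; rewrite e_irr.
by [].
Qed.

Lemma vweight_branch_mem (D : {set T}) q c : e q c -> c \in D ->
  vweight D q (branch q c) = 2%:R^-1.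
Proof.
move=> Hqc HcD; rewrite /vweight (eq_bigl (pred1 c)) => [|y].
  by rewrite big_pred1_eq (tpath_edge Hqc) halfpowS /halfpow expr0 mulr1.
apply/andP/eqP => [[/tpath_branch Ey /andP [_ /allP Hall]]|->].
  by move: (Hall c); rewrite Ey mem_head HcD orbF => /(_ isT) /eqP.
rewrite inE (tpath_edge Hqc) eqxx /visible HcD (tpath_edge Hqc) /=.
by rewrite eqxx.
Qed.

Lemma vweight_branch_notin (D : {set T}) q c : e q c -> c \notin D ->
  vweight D q (branch q c) <=
  2%:R^-1 * \sum_(c' in [set z | e c z] :\ q) vweight D c (branch c c').
Proof.
move=> Hqc HcD; rewrite /vweight.
apply: (@le_trans _ _ (\sum_(y in branch q c | visible D q y)
                         2%:R^-1 * halfpow (size (tpath c y)))).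
  by apply: ler_sum => y /andP [/tpath_branch -> _]; rewrite halfpowS.
apply: (@le_trans _ _ (\sum_(y in branch q c | visible D c y)
                         2%:R^-1 * halfpow (size (tpath c y)))).
  apply: ler_sum_subpred => [y /andP [Hy Hv]|y _]; last first.
    by rewrite mulr_ge0 ?halfpow_ge0 ?invr_ge0.
  rewrite Hy /=; move: Hv; rewrite /visible (tpath_branch Hy) /=.
  by case/andP => -> /andP [].
rewrite -big_distrr /= ler_wpM2l ?invr_ge0 //.
apply: vweight_le_branches => y Hy /andP [HyD _].
have Hcy : c != y by apply: contraNneq HcD => ->.
have [c' Ho] : exists c', ohead (tpath c y) = Some c'.
  by case: (tpath c y) (tpath_eq0 c y) => [|c' ?]; rewrite ?(negbTE Hcy) //; exists c'.
apply/existsP; exists c'; rewrite Ho eqxx andbT !inE.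
have [Hcc' Ey] := tpath_ohead Ho; rewrite Hcc' andbT.
apply: contraTneq (tpath_uniq q y) => Eq.
by rewrite (tpath_branch Hy) Ey Eq /= inE mem_head orbT.
Qed.

(** * Subcubic trees *)

Section Subcubic.
Hypothesis Tdeg : forall x, (deg e x <= 3)%N.

Lemma card_nbrs_but q c : e c q -> (#|[set z | e c z] :\ q| <= 2)%N.
Proof. by move=> Hcq; have := Tdeg c; rewrite /deg (cardsD1 q) inE Hcq add1n ltnS. Qed.

Lemma vweight_branch_le_half D q c : e q c -> vweight D q (branch q c) <= 2%:R^-1.
Proof.
suff H n : (#|branch q c| < n)%N -> e q c -> vweight D q (branch q c) <= 2%:R^-1.
  exact: H (ltnSn _).
elim: n q c => [//|n IH] q c Hn Hqc.
case: (boolP (c \in D)) => HcD; first by rewrite vweight_branch_mem.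
apply: le_trans (vweight_branch_notin Hqc HcD) _.
rewrite -[X in _ <= X]mulr1 ler_wpM2l ?invr_ge0 //.
apply: sum_le1_card_le2; first by apply: card_nbrs_but; rewrite e_sym.
move=> c'; rewrite !inE => /andP [Hc'q Hcc']; apply: (IH _ _ _ Hcc').
exact: leq_trans (proper_card (branch_proper Hqc Hcc' Hc'q)) Hn.
Qed.

Section SubtreeBoundary.
Variable r : T.

(* Weight reaches T_u from outside only through the parent of u, that is, through a
   single branch, of weight at most 1/2. *)
Lemma sum_wterm_out_desc_le u (D : {set T}) v :
  u != r -> v \in desc e r u -> v \notin D ->
  \sum_(s in D :&: ~: desc e r u) wterm setT D v s <= halfpow (size (tpath u v)).
Proof.
move=> Hur Hv HvD; set p := penult r u.
have Hgate s : s \in ~: desc e r u -> u \in v :: tpath v s.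
  by rewrite in_setC => Hs; rewrite mem_tpath_rev mem_cons_tl // (desc_gate Hs Hv).
apply: le_trans (sum_wterm_through HvD Hgate) _.
have Hup : e u p by rewrite e_sym penult_edge // eq_sym.
have Hvw : vweight D u (~: desc e r u) <= vweight D u (branch u p).
  apply: le_trans (@vweight_le_branches D u _ [set p] _) _; last by rewrite big_set1.
  move=> s; rewrite in_setC => Hs _; apply/existsP; exists p.
  by rewrite in_set1 (ohead_tpath_out Hur Hs) !eqxx.
move: Hvw (vweight_branch_le_half D Hup) (halfpow_ge0 (size (tpath u v))).
rewrite (size_tpath_rev u v); nra.
Qed.

Lemma vweight_desc_le1 u (D : {set T}) : u != r -> u \notin D ->
  vweight D u (desc e r u) <= 1.
Proof.
move=> Hur HuD; set p := penult r u.
have Hup : e u p by rewrite e_sym penult_edge // eq_sym.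
apply: le_trans (@vweight_le_branches D u _ ([set z | e u z] :\ p) _) _.
  move=> s Hs /andP [HsD _].
  have Hsu : s != u by apply: contraNneq HuD => <-.
  have [c [Huc Hc _ _ Ec]] := desc_child Hs Hsu.
  apply/existsP; exists c; rewrite Ec eqxx in_setD1 inE Huc !andbT.
  by apply: contraNneq (penult_notin_desc Hur) => Ecp; rewrite -/p -Ecp.
apply: sum_le1_card_le2 => [|c]; first exact: card_nbrs_but.
by rewrite !inE => /andP [_ /vweight_branch_le_half].
Qed.

(* Everything in T_u is seen through u, and the at most two child branches of u
   weigh at most 1/2 each. *)
Lemma sum_wterm_desc_le_gate u (D D' : {set T}) x : u != r ->
  (forall z, z \notin desc e r u -> (z \in D') = (z \in D)) -> u \in D' ->
  x \notin desc e r u -> x \notin D ->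
  \sum_(s in D :&: desc e r u) wterm setT D x s <= wterm setT D' x u.
Proof.
move=> Hur HD' HuD' Hx HxD.
have Hu := desc_self r u.
have Hxu : x != u by apply: contraNneq Hx => ->.
have Hgate s : s \in desc e r u -> u \in tpath x s := desc_gate Hx.
have Hout z : z \in tpath x u -> z != u -> z \notin desc e r u.
  move=> Hz Hzu; apply: (tpath_out_notin_desc Hur Hx).
  by move: (mem_cons_tl x Hz); rewrite -mem_tpath_rev inE (negbTE Hzu).
case: (boolP (tspath setT D' x u)) => Hts'; last first.
  rewrite /wterm (negbTE Hts') big1 // => s; rewrite in_setI => /andP [HsD Hsu].
  rewrite ifF //; apply: contraNF Hts' => Hts.
  apply: tspathI => //; first by move=> z; rewrite in_setT.
    by rewrite HD' // (negbTE HxD) HuD'.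
  move=> z Hz Hzu; rewrite HD' ?Hout //; apply: (tspath_inner Hts).
    by rewrite (tpath_cat (mem_cons_tl _ (Hgate s Hsu))) mem_cat Hz.
  by apply: contraNneq (Hout z Hz Hzu) => ->.
have -> : wterm setT D' x u = 2 * halfpow (size (tpath x u)) by rewrite /wterm Hts'.
case: (boolP (u \in D)) => HuD.
  rewrite (big_setD1 u) ?in_setI ?HuD //= big1 ?addr0 ?wterm_le // => s.
  rewrite in_setD1 in_setI => /andP [Hsu /andP [_ Hsd]]; rewrite /wterm ifF //.
  by apply/negP => /tspath_inner /(_ (Hgate s Hsd)); rewrite eq_sym Hsu HuD => /(_ isT).
have Hthrough s : s \in desc e r u -> u \in x :: tpath x s by move/Hgate/mem_cons_tl.
apply: le_trans (sum_wterm_through HxD Hthrough) _.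
by rewrite -[X in _ <= X]mulr1 ler_wpM2l ?vweight_desc_le1 // mulr_ge0 ?halfpow_ge0.
Qed.

Lemma weight_ge1_out_desc u (D D' : {set T}) x : u != r -> eds e setT D ->
  (forall z, z \notin desc e r u -> (z \in D') = (z \in D)) -> u \in D' ->
  x \notin desc e r u -> 1 <= weight e setT D' x.
Proof.
move=> Hur /andP [_ /forallP HD] HD' HuD' Hx.
case: (boolP (x \in D)) => HxD.
  by apply: le_trans (weight_ge2 _ _) => //; rewrite ?in_setT ?HD'.
have Eout : D' :\: desc e r u = D :\: desc e r u.
  by apply/setP => z; rewrite !in_setD; case: (boolP (z \in desc e r u)) => //= /HD'.
have Hsame : \sum_(s in D :\: desc e r u) wterm setT D x s =
             \sum_(s in D' :\: desc e r u) wterm setT D' x s.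
  rewrite Eout; apply: eq_bigr => s; rewrite in_setD => /andP [Hs _].
  rewrite /wterm (@eq_tspath _ D D') // => z Hz.
  by rewrite HD' // (tpath_out_avoid Hx Hs Hz).
have HuT : u \in D' :&: desc e r u by rewrite in_setI HuD' desc_self.
have Hu_le : wterm setT D' x u <= \sum_(s in D' :&: desc e r u) wterm setT D' x s.
  rewrite (big_setD1 u HuT) /= lerDl; apply: sumr_ge0 => s _; exact: wterm_ge0.
move: (HD x) (sum_wterm_desc_le_gate Hur HD' HuD' Hx HxD) Hu_le.
rewrite in_setT /= !weightE (big_setID (A := D) (desc e r u)).
by rewrite (big_setID (A := D') (desc e r u)) /= Hsame; lra.
Qed.

End SubtreeBoundary.

(** * Exchanging a minimum exponential dominating set *)

Section Endvertices.
Variables (r : T) (S : {set T}).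
Hypothesis S_end : forall x, x \in S -> (deg e x <= 1)%N.

Lemma tpath_inner_notin x y z : z \in tpath x y -> z != y -> z \notin S.
Proof.
move=> Hz Hzy; apply/negP => /S_end.
by rewrite leqNgt (deg_inner_tpath Hz Hzy).
Qed.

Lemma dterm_le1E u v : (dterm e r S u v <= 1) =
  (1 - weight e (desc e r u) (S :&: desc e r u) v <= halfpow (size (tpath u v))).
Proof.
have H2 : 0 < 2%:R ^+ size (tpath u v) :> rat by rewrite exprn_gt0.
by rewrite /dterm gdistE -[X in _ = X](ler_pM2l H2) exp2_halfpow.
Qed.

Lemma dw_le1P u :
  reflect (forall v, v \in desc e r u -> dterm e r S u v <= 1) (dw e r S u <= 1).
Proof.
apply: (iffP idP) => [Hle v Hv | H].
  exact: le_trans (le_bigmax_cond _ _ Hv) Hle.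
by apply/bigmax_leP; split=> [|v /H //]; apply: H; exact: desc_self.
Qed.

Lemma weight_ge1_desc u (D : {set T}) :
  (forall z, z \in desc e r u -> (z \in D) = (z \in S) || (z == u)) ->
  (forall c, c \in desc e r u -> c != u -> dw e r S c <= 1) ->
  forall v, v \in desc e r u -> 1 <= weight e setT D v.
Proof.
move=> HD Hdw v Hv.
case: (boolP (v \in D)) => HvD.
  by apply: le_trans (weight_ge2 _ HvD); rewrite ?inE.
have HuD : u \in D by rewrite HD ?desc_self // eqxx orbT.
have Hvu : v != u by apply: contraNneq HvD => ->.
have [c [Huc Hc Hcu Hvc Ecv]] := desc_child Hv Hvu.
have Hgap : 1 - weight e (desc e r c) (S :&: desc e r c) v <= halfpow (size (tpath c v)).
  by rewrite -dterm_le1E; move/dw_le1P: (Hdw c Hc Hcu); apply.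
have Hwu : wterm setT D v u = halfpow (size (tpath c v)).
  rewrite /wterm ifT; last first.
    apply: tspathI => //; first by move=> z _; rewrite in_setT.
      by rewrite (negbTE HvD) HuD.
    move=> z Hz Hzu; have Hzd : z \in desc e r u.
      by apply: (desc_subpath Hv); rewrite -mem_tpath_rev mem_cons_tl.
    by rewrite HD // negb_or (tpath_inner_notin Hz Hzu) Hzu.
  by rewrite size_tpath_rev Ecv /= halfpowS mulrA mulfV ?mul1r // pnatr_eq0.
have Huc' : u \notin desc e r c := parent_notin_desc Huc Hc.
have Hsub : weight e (desc e r c) (S :&: desc e r c) v <=
            \sum_(s in D :\ u) wterm setT D v s.
  rewrite weightE; apply: ler_sum_wterm => [|s].
    apply/subsetP => s; rewrite in_setI => /andP [HsS Hsc].
    rewrite in_setD1 HD ?(desc_trans Hc Hsc) // HsS /= andbT.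
    by apply: contraNneq Huc' => <-.
  rewrite in_setI => /andP [HsS Hsc] Hts.
  have HsD : s \in D by rewrite HD ?HsS ?(desc_trans Hc Hsc).
  apply: tspathI; [by apply: contraNneq HvD => -> | by move=> z _; rewrite in_setT |
                   by rewrite (negbTE HvD) HsD |].
  move=> z Hz Hzs.
  have Hzc : z \in desc e r c by apply: (tspath_sub Hts); rewrite mem_cons_tl.
  have := tspath_inner Hts Hz Hzs; rewrite in_setI Hzc andbT => HzS.
  rewrite HD ?(desc_trans Hc Hzc) // negb_or HzS.
  by apply: contraNneq Huc' => <-.
by rewrite weightE (big_setD1 u HuD) /= Hwu; lra.
Qed.

Lemma sum_wterm_desc_le u (D : {set T}) v : v \in desc e r u -> v \notin S ->
  S \subset D -> D :&: desc e r u \subset S ->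
  \sum_(s in D :&: desc e r u) wterm setT D v s <=
  weight e (desc e r u) (S :&: desc e r u) v.
Proof.
move=> Hv HvS /subsetP HSD sDS; rewrite weightE; apply: ler_sum_wterm => [|s].
  by rewrite subsetI sDS subsetIr.
rewrite in_setI => /andP [HsD Hsu] Hts.
have HsS : s \in S by apply: (subsetP sDS); rewrite in_setI HsD.
have Hvs : v != s by apply: contraNneq HvS => ->.
apply: tspathI => //; first by move=> z; apply: desc_convex.
  by rewrite !in_setI (negbTE HvS) HsS Hsu.
move=> z Hz Hzs; rewrite in_setI negb_and; apply/orP; left.
by apply: contra (tspath_inner Hts Hz Hzs); apply: HSD.
Qed.

Lemma dw_le1_eds u (D : {set T}) : u != r -> eds e setT D -> S \subset D ->
  D :&: desc e r u \subset S -> dw e r S u <= 1.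
Proof.
move=> Hur /andP [_ /forallP HD] HSD sDS; apply/dw_le1P => v Hv; rewrite dterm_le1E.
case: (boolP (v \in S)) => HvS.
  have := @weight_ge2 (desc e r u) (S :&: desc e r u) v Hv; rewrite in_setI HvS Hv.
  by move/(_ isT) => H2; have := halfpow_ge0 (size (tpath u v)); lra.
have HvD : v \notin D.
  by apply: contra HvS => HvD; apply: (subsetP sDS); rewrite in_setI HvD.
move: (HD v); rewrite in_setT /= weightE (big_setID (desc e r u)) /= setDE.
by move: (sum_wterm_desc_le Hv HvS HSD sDS) (sum_wterm_out_desc_le Hur Hv HvD); lra.
Qed.

Definition exchange (D : {set T}) u := (D :\: desc e r u) :|: (u |: (S :&: desc e r u)).

Lemma in_exchange_out (D : {set T}) u z : z \notin desc e r u ->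
  (z \in exchange D u) = (z \in D).
Proof.
move=> Hz; have Hzu : (z == u) = false by apply: contraNF Hz => /eqP ->; apply: desc_self.
by rewrite !in_setU in_setD in_set1 in_setI Hz (negbTE Hz) Hzu andbF !orbF.
Qed.

Lemma in_exchange_desc (D : {set T}) u z : z \in desc e r u ->
  (z \in exchange D u) = (z \in S) || (z == u).
Proof. by move=> Hz; rewrite !in_setU in_setD in_set1 in_setI Hz /= andbT orbC. Qed.

Lemma eds_exchange (D : {set T}) u : u != r -> eds e setT D ->
  (forall c, c \in desc e r u -> c != u -> dw e r S c <= 1) -> eds e setT (exchange D u).
Proof.
move=> Hur HD Hdw; rewrite /eds subsetT /=; apply/forallP => x; apply/implyP => _.
have HuX : u \in exchange D u by rewrite in_exchange_desc ?desc_self // eqxx orbT.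
case: (boolP (x \in desc e r u)) => Hx.
  exact: (weight_ge1_desc (fun z => @in_exchange_desc D u z)).
exact: (weight_ge1_out_desc Hur HD (fun z => @in_exchange_out D u z) HuX).
Qed.

Lemma card_exchange (D : {set T}) u : S \subset D -> ~~ (D :&: desc e r u \subset S) ->
  (#|exchange D u| <= #|D|)%N.
Proof.
move=> HSD HDS.
have Hlt : (#|S :&: desc e r u| < #|D :&: desc e r u|)%N.
  apply: proper_card; rewrite properE setSI //=.
  by apply: contra HDS => /subset_trans; apply; apply: subsetIl.
have := cardsID (desc e r u) D.
have := cardsUI (D :\: desc e r u) (u |: (S :&: desc e r u)).
by rewrite cardsU1 /exchange; lia.
Qed.

Lemma min_eds_exchange u : (exists D, min_eds e D /\ S \subset D) ->
  u != r -> 1 < dw e r S u ->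
  (forall v, v \in desc e r u -> v != u -> dw e r S v <= 1) ->
  exists D, min_eds e D /\ (u |: S) \subset D.
Proof.
move=> [D [[HDeds HDmin] HSD]] Hur Hdw Hdesc.
have HDS : ~~ (D :&: desc e r u \subset S).
  by apply: contraL Hdw => /(dw_le1_eds Hur HDeds HSD); rewrite ltNge => ->.
exists (exchange D u); split.
  split; first exact: eds_exchange.
  by move=> D' /HDmin; apply: leq_trans (card_exchange HSD HDS).
apply/subsetP => y; rewrite in_setU1; case/orP => [/eqP ->|HyS].
  by rewrite in_exchange_desc ?desc_self // eqxx orbT.
case: (boolP (y \in desc e r u)) => Hy; first by rewrite in_exchange_desc // HyS.
by rewrite in_exchange_out // (subsetP HSD).
Qed.

Lemma min_eds_root : ~~ eds e setT S -> (exists D, min_eds e D /\ S \subset D) ->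
  r \notin S -> (forall u, dw e r S u <= 1) -> min_eds e (r |: S).
Proof.
move=> S_not [D [[HDeds HDmin] HSD]] HrS Hall; split.
  rewrite /eds subsetT; apply/forallP => x; apply/implyP => _.
  by apply: (@weight_ge1_desc r) (desc_root r x) => [z _|c _ _]; rewrite ?in_setU1 1?orbC.
move=> D' /HDmin; apply: leq_trans.
rewrite cardsU1 HrS add1n; apply: proper_card; rewrite properEneq HSD andbT.
by apply: contraNneq S_not => ->.
Qed.

End Endvertices.

End Subcubic.

End TreePaths.

Local Open Scope ring_scope.

Theorem lemma3 (T : finType) (e : rel T)
  (e_sym : symmetric e) (e_irr : irreflexive e) (Ttree : is_tree e)
  (Tdeg : forall x : T, (deg e x <= 3)%N)
  (S : {set T}) (S_end : forall x, x \in S -> (deg e x <= 1)%N)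
  (S_not : ~~ eds e setT S)
  (S_sub : exists D : {set T}, min_eds e D /\ S \subset D)
  (r : T) (r_notS : r \notin S) :
  (forall u : T, u != r -> 1 < dw e r S u ->
     (forall v : T, v \in desc e r u -> v != u -> dw e r S v <= 1) ->
     exists D : {set T}, min_eds e D /\ (u |: S) \subset D)
  /\
  ((forall u : T, dw e r S u <= 1) -> min_eds e (r |: S)).
Proof.
split=> [u|]; first exact: (min_eds_exchange e_sym e_irr Ttree Tdeg S_end S_sub).
exact: (min_eds_root e_sym e_irr Ttree S_end S_not S_sub r_notS).
Qed.
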